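(* Let $k\ge 2$, let $B=M\cup\{\omega_1,\ldots,\omega_p\}$ with $p\ge 1$ and $\omega_1,\ldots,\omega_p\in P_k\setminus M$, and let $F$ be a finite system of functions from $P_k(n)$. Then $$I_B(F)\ge\left\lceil \log_{d(B)+1}\bigl(d(F)+1\bigr)\right\rceil .$$
   Context: Let $k\ge 2$ be an integer and $E_k=\{0,1,\ldots,k-1\}$. $P_k(n)$ denotes the set of all functions $E_k^n\to E_k$, and $P_k=\bigcup_n P_k(n)$. Tuples in $E_k^n$ are ordered componentwise: $\tilde\alpha\le\tilde\beta$ iff $\alpha_j\le\beta_j$ for all $j$. A function $f$ is monotone if $\tilde\alpha\le\tilde\beta$ implies $f(\tilde\alpha)\le f(\tilde\beta)$; $M$ is the set of all monotone functions in $P_k$ (of all arities, including constants). A basis is a set $B=M\cup\{\omega_1,\ldots,\omega_p\}$ with $p\ge1$ and $\omega_i\in P_k\setminus M$. A circuit over $B$ with inputs $x_1,\ldots,x_n$ is a finite directed acyclic graph whose source nodes are labelled by the variables $x_1,\ldots,x_n$ and each of whose other nodes (gates) is labelled by a $q$-ary function from $B$ and has $q$ ordered incoming edges; each node computes a function of $P_k(n)$ in the obvious way. A circuit realizes a system $F$ of functions of $x_1,\ldots,x_n$ if every function of $F$ is computed at some node. Gates labelled by functions of $M$ have weight $0$, gates labelled by some $\omega_i$ have weight $1$. The non-monotone complexity $I_B(S)$ of a circuit $S$ is the sum of the weights of its gates; $I_B(F)$ is the minimum of $I_B(S)$ over all circuits $S$ over $B$ realizing $F$, and $I_B(f)=I_B(\{f\})$.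 A chain is a sequence $\tilde\alpha_1,\ldots,\tilde\alpha_r$ of pairwise distinct tuples of $E_k^n$ with $\tilde\alpha_i\le\tilde\alpha_{i+1}$ for $i=1,\ldots,r-1$. A pair $(\tilde\alpha,\tilde\beta)$ with $\tilde\alpha\le\tilde\beta$ is a jump for a system $F$ if $f(\tilde\alpha)>f(\tilde\beta)$ for at least one $f\in F$. For a chain $C=(\tilde\alpha_1,\ldots,\tilde\alpha_r)$, the decrease $d_C(F)$ is the number of $i\in\{1,\ldots,r-1\}$ such that $(\tilde\alpha_i,\tilde\alpha_{i+1})$ is a jump for $F$. The decrease $d(F)$ is the maximum of $d_C(F)$ over all chains $C$ in $E_k^n$; $d(f)=d(\{f\})$. Finally $d(B)=\max\{d(\omega_1),\ldots,d(\omega_p)\}$. *)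

From mathcomp Require Import all_boot.
Set Implicit Arguments. Unset Strict Implicit. Unset Printing Implicit Defensive.

Definition tup (k n : nat) := {ffun 'I_n -> 'I_k}.
Definition fn (k n : nat) := {ffun tup k n -> 'I_k}.

Definition leT (k n : nat) (a b : tup k n) : bool := [forall j, a j <= b j].

Definition monotoneb (k n : nat) (f : fn k n) : bool :=
  [forall a : tup k n, forall b : tup k n, leT a b ==> (f a <= f b)].

Definition jumpb (k n : nat) (F : seq (fn k n)) (a b : tup k n) : bool :=
  leT a b && has (fun f : fn k n => f b < f a) F.

Definition chainb (k n : nat) (s : seq (tup k n)) : bool :=
  uniq s && sorted (@leT k n) s.

Definition dC (k n : nat) (F : seq (fn k n)) (s : seq (tup k n)) : nat :=
  count (fun p => jumpb F p.1 p.2) (zip s (behead s)).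

(* decrease d(F): maximum over all chains (a chain has at most #|E_k^n|
   elements since its entries are pairwise distinct) *)
Definition dec (k n : nat) (F : seq (fn k n)) : nat :=
  \max_(r < #|{: tup k n}|.+1)
     \max_(s : r.-tuple (tup k n) | chainb s) dC F s.

(* basis B = M ∪ om; d(B) = max over the ω_i *)
Definition decB (k : nat) (om : seq {q : nat & fn k q}) : nat :=
  \max_(w <- om) dec [:: tagged w].

(* Circuits with n inputs: the nodes are numbered 0..m-1, nodes 0..n-1 are
   the input variables, each further node is a gate whose inputs are
   earlier nodes (this is a topological ordering of the DAG). *)
Record gate (k m : nat) := Gate {
  garity : nat;
  glab : fn k garity;
  gargs : 'I_garity -> 'I_m }.

Inductive circuit (k n : nat) : nat -> Type :=
| cnil : circuit k n n
| csnoc (m : nat) : circuit k n m -> gate k m -> circuit k n m.+1.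

Fixpoint nodefun (k n m : nat) (C : circuit k n m) : 'I_m -> tup k n -> 'I_k :=
  match C in circuit _ _ m0 return 'I_m0 -> tup k n -> 'I_k with
  | cnil => fun i a => a i
  | @csnoc _ _ m' C' g =>
      fun i a =>
        match unlift ord_max i with
        | Some j => nodefun C' j a
        | None => glab g [ffun j => nodefun C' (@gargs _ _ g j) a]
        end
  end.

Fixpoint over_basis (k n m : nat) (om : seq {q : nat & fn k q})
    (C : circuit k n m) : Prop :=
  match C with
  | cnil => True
  | @csnoc _ _ m' C' g =>
      over_basis om C' /\
      (monotoneb (glab g) \/ (Tagged (fn k) (glab g) \in om))
  end.

Fixpoint Icost (k n m : nat) (C : circuit k n m) : nat :=
  match C with
  | cnil => 0
  | @csnoc _ _ m' C' g => Icost C' + ~~ monotoneb (glab g)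
  end.

Definition realizes (k n m : nat) (C : circuit k n m) (F : seq (fn k n)) : Prop :=
  forall f, f \in F -> exists i : 'I_m, forall a, nodefun C i a = f a.

From mathcomp Require Import all_boot.
From mathcomp Require Import zify.

Set Implicit Arguments. Unset Strict Implicit. Unset Printing Implicit Defensive.

(* Count the jumps of the whole circuit (pairs at which some node decreases)
   along a chain.  A monotone gate creates no new jumps.  An ω-gate does:
   between two consecutive jumps of the smaller circuit every node is
   nondecreasing, so the input tuples of the ω-gate form a chain and the gate
   itself jumps at most d(B) times there.  With c jumps before the gate this
   gives at most c + (c + 1) d(B) jumps after it, i.e. c + 1 gets multiplied by
   at most d(B) + 1.  Hence a circuit with I ω-gates has fewer than
   (d(B) + 1)^I jumps on every chain, and the jumps of F are among them. *)

Section CountSteps.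
Variable T : Type.
Implicit Types (R P Q : T -> T -> bool) (x : T) (s t : seq T).

Fixpoint count_steps R x s : nat :=
  if s is y :: s' then R x y + count_steps R y s' else 0.

Lemma count_steps_cat R x s t :
  count_steps R x (s ++ t) = count_steps R x s + count_steps R (last x s) t.
Proof. by elim: s x => [|y s IH] x //=; rewrite IH addnA. Qed.

Lemma count_steps_sub_path (E R1 R2 : T -> T -> bool) x s :
  path E x s -> (forall a b, E a b -> R1 a b -> R2 a b) ->
  count_steps R1 x s <= count_steps R2 x s.
Proof.
elim: s x => [|y s IH] x //= /andP[Exy Ep] sub12.
apply: leq_add; last exact: IH.
by case: (R1 x y) (sub12 x y Exy) => // ->.
Qed.

Lemma count_steps_sub R1 R2 x s :
  (forall a b, R1 a b -> R2 a b) -> count_steps R1 x s <= count_steps R2 x s.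
Proof.
move=> sub12; apply: (@count_steps_sub_path (fun _ _ => true)) => [|a b _]; last exact: sub12.
by elim: s x => //= y s IH x.
Qed.

Lemma eq_count_steps R1 R2 x s : R1 =2 R2 -> count_steps R1 x s = count_steps R2 x s.
Proof. by move=> eqR; elim: s x => //= y s IH x; rewrite eqR IH. Qed.

Lemma count_steps_eq0 R x s : (count_steps R x s == 0) = path (fun a b => ~~ R a b) x s.
Proof. by elim: s x => //= y s IH x; case: (R x y); rewrite ?add0n ?add1n ?IH. Qed.

(* Cut the sequence at its P-steps: each of the count_steps P x s + 1 pieces
   contributes at most D steps of Q. *)
Lemma count_steps_or P Q D :
  (forall x t, count_steps P x t = 0 -> count_steps Q x t <= D) ->
  forall x s, count_steps (fun a b => P a b || Q a b) x s <= D + count_steps P x s * D.+1.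
Proof.
move=> boundQ x s.
set PQ := fun a b => P a b || Q a b.
have onlyQ y t : count_steps P y t = 0 -> count_steps PQ y t <= D.
  move=> P0; suff <- : count_steps Q y t = count_steps PQ y t by apply: boundQ.
  elim: t y P0 => //= z t IH y; rewrite /PQ.
  by case: (P y z) => //= /IH ->.
suff: forall t, count_steps P x t = 0 ->
    count_steps PQ x (t ++ s) <= D + count_steps P (last x t) s * D.+1.
  by move/(_ [::] erefl).
elim: s x => [|z s IH] x t P0; first by rewrite cats0 addn0 onlyQ.
rewrite count_steps_cat /=.
have headQ := onlyQ x t P0.
case Pz: (P (last x t) z).
  have -> : PQ (last x t) z = true by rewrite /PQ Pz.
  by have /= := IH z [::] erefl; lia.
have := IH x (rcons t z); rewrite last_rcons -cats1 -catA !count_steps_cat /= P0 Pz.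
have -> : PQ (last x t) z = Q (last x t) z by rewrite /PQ Pz.
by move/(_ erefl); lia.
Qed.

End CountSteps.

Lemma count_steps_map (T U : Type) (f : T -> U) (e : U -> U -> bool) x s :
  count_steps e (f x) (map f s) = count_steps (fun a b => e (f a) (f b)) x s.
Proof. by elim: s x => //= y s IH x; rewrite IH. Qed.

Section TupleOrder.
Variables k n : nat.
Implicit Types a b c : tup k n.

Lemma leT_trans : transitive (@leT k n).
Proof.
move=> b a c /forallP ab /forallP bc; apply/forallP => j.
exact: leq_trans (ab j) (bc j).
Qed.

Lemma leT_anti a b : leT a b -> leT b a -> a = b.
Proof.
move=> /forallP ab /forallP ba; apply/ffunP => j; apply/val_inj/eqP.
by rewrite eqn_leq ab ba.
Qed.

Definition ltT a b := leT a b && (a != b).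

Lemma ltT_trans : transitive ltT.
Proof.
move=> b a c /andP[ab nab] /andP[bc nbc]; rewrite /ltT (leT_trans ab bc) /=.
by apply: contra_neq nab => ac; subst c; apply: leT_anti.
Qed.

Fixpoint drop_repeats (y : tup k n) (s : seq (tup k n)) : seq (tup k n) :=
  if s is z :: s' then
    if z == y then drop_repeats y s' else z :: drop_repeats z s'
  else [::].

Lemma drop_repeats_path y s : path (@leT k n) y s -> path ltT y (drop_repeats y s).
Proof.
elim: s y => //= z s IH y /andP[yz zs].
case: eqP => [zy | /eqP zy]; first by subst z; apply: IH.
by rewrite /= /ltT yz eq_sym zy IH.
Qed.

Lemma count_steps_drop_repeats (R : rel (tup k n)) y s :
  irreflexive R -> count_steps R y (drop_repeats y s) = count_steps R y s.
Proof.
move=> Rirr; elim: s y => //= z s IH y.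
by case: eqP => [-> | _] /=; rewrite ?Rirr IH.
Qed.

Lemma chainb_ltT_path y s : path ltT y s -> chainb (y :: s).
Proof.
move=> ys; apply/andP; split; last by apply: sub_path ys => a b /andP[].
apply: (sorted_uniq ltT_trans); last exact: ys.
by move=> a; rewrite /ltT eqxx andbF.
Qed.

End TupleOrder.

Section Decrease.
Variables k n : nat.
Variable F : seq (fn k n).

Lemma dC_cons x s : dC F (x :: s) = count_steps (jumpb F) x s.
Proof. by rewrite /dC /=; elim: s x => //= y s IH x; rewrite IH. Qed.

Lemma dC_le_dec s : chainb s -> dC F s <= dec F.
Proof.
move=> chain_s.
have size_s : size s < #|{: tup k n}|.+1.
  by rewrite ltnS; case/andP: chain_s => /card_uniqP <- _; apply: max_card.
apply: leq_trans (leq_bigmax (Ordinal size_s)).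
exact: (leq_bigmax_cond (in_tuple s)).
Qed.

Lemma dec_lt_bound b : (forall s, chainb s -> dC F s < b) -> dec F < b.
Proof.
move=> lt_b; have b_gt0 : 0 < b by apply: (lt_b [::]).
rewrite -(prednK b_gt0) ltnS.
apply/bigmax_leqP => r _; apply/bigmax_leqP => s /lt_b.
by rewrite -(prednK b_gt0) ltnS.
Qed.

(* Repetitions are allowed here: they never carry a jump. *)
Lemma path_jumps_le_dec y s :
  path (@leT k n) y s -> count_steps (jumpb F) y s <= dec F.
Proof.
move=> ys; rewrite -count_steps_drop_repeats; last first.
  by move=> a; rewrite /jumpb; apply/negP => /andP[_ /hasP[f _]]; rewrite ltnn.
by rewrite -dC_cons dC_le_dec // chainb_ltT_path // drop_repeats_path.
Qed.

End Decrease.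

Lemma path_decreases_le_dec k q (f : fn k q) y s :
  path (@leT k q) y s -> count_steps (fun a b => f b < f a) y s <= dec [:: f].
Proof.
move=> ys; apply: leq_trans (path_jumps_le_dec [:: f] ys).
apply: (count_steps_sub_path ys) => a b ab fab.
by rewrite /jumpb ab /= fab.
Qed.

Lemma dec_le_decB k (om : seq {q : nat & fn k q}) w :
  w \in om -> dec [:: tagged w] <= decB om.
Proof.
move=> w_in.
exact: (@leq_bigmax_seq _ om _ (fun w : {q : nat & fn k q} => dec [:: tagged w]) _ w_in).
Qed.

Section Circuits.
Variables k n : nat.

Definition circuit_jump m (C : circuit k n m) (a b : tup k n) : bool :=
  [exists i, nodefun C i b < nodefun C i a].

Definition gate_input m (C : circuit k n m) (g : gate k m) (a : tup k n) :
  tup k (garity g) := [ffun j => nodefun C (@gargs _ _ g j) a].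

Lemma circuit_jump_snoc m (C : circuit k n m) g a b :
  circuit_jump (csnoc C g) a b =
  circuit_jump C a b || (glab g (gate_input C g b) < glab g (gate_input C g a)).
Proof.
apply/existsP/orP => [[i] | [/existsP[j ji] | gba]] /=.
- by case: unliftP => [j _ ji | _ gba]; [left; apply/existsP; exists j | right].
- by exists (lift ord_max j); rewrite /= liftK.
- by exists ord_max; rewrite /= unlift_none.
Qed.

Lemma leT_gate_input m (C : circuit k n m) g a b :
  ~~ circuit_jump C a b -> leT (gate_input C g a) (gate_input C g b).
Proof.
move=> no_jump; apply/forallP => j; rewrite !ffunE leqNgt.
by apply: contra no_jump => ji; apply/existsP; exists (@gargs _ _ g j).
Qed.

Lemma circuit_jump_cnil a b : leT a b -> circuit_jump (cnil k n) a b = false.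
Proof. by move=> /forallP ab; apply/existsP => -[i] /=; rewrite ltnNge ab. Qed.

Lemma circuit_jump_snoc_monotone m (C : circuit k n m) g :
  monotoneb (glab g) -> circuit_jump (csnoc C g) =2 circuit_jump C.
Proof.
move=> /forallP mono a b; rewrite circuit_jump_snoc.
case: (boolP (circuit_jump C a b)) => //= /(leT_gate_input g) le_in.
move: mono => /(_ (gate_input C g a)) /forallP /(_ (gate_input C g b)).
by rewrite le_in /= ltnNge => ->.
Qed.

Lemma count_jumps_snoc m (C : circuit k n m) g D x s :
  dec [:: glab g] <= D ->
  count_steps (circuit_jump (csnoc C g)) x s <=
  D + count_steps (circuit_jump C) x s * D.+1.
Proof.
move=> decD; rewrite (eq_count_steps _ _ (circuit_jump_snoc C g)).
apply: count_steps_or => y t /eqP; rewrite count_steps_eq0 => no_jumps.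
apply: leq_trans decD.
rewrite -(count_steps_map (gate_input C g) (fun a b => glab g b < glab g a)).
apply: path_decreases_le_dec; rewrite path_map.
by apply: sub_path no_jumps => a b; apply: leT_gate_input.
Qed.

Lemma circuit_jumps_lt m (C : circuit k n m) om x s :
  over_basis om C -> path (@leT k n) x s ->
  count_steps (circuit_jump C) x s < (decB om).+1 ^ Icost C.
Proof.
elim: C => [|m' C IH g] /= => [_ | [onC g_in]] xs.
  rewrite expn0 ltnS leqn0 count_steps_eq0.
  by apply: sub_path xs => a b /circuit_jump_cnil ->.
case: (boolP (monotoneb (glab g))) => [mono | non_mono] /=.
  by rewrite addn0 (eq_count_steps _ _ (circuit_jump_snoc_monotone C mono)) IH.
have /dec_le_decB dec_g : Tagged (fn k) (glab g) \in om.
  by case: g_in => //; rewrite (negbTE non_mono).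
apply: leq_ltn_trans (count_jumps_snoc C x s dec_g) _.
have := IH onC xs; rewrite addn1 expnS; nia.
Qed.

End Circuits.

Theorem theorem1 (k : nat) (hk : 2 <= k) (om : seq {q : nat & fn k q})
  (hp : om != [::]) (hom : forall w, w \in om -> ~~ monotoneb (tagged w))
  (n : nat) (F : seq (fn k n)) (m : nat) (C : circuit k n m) :
  over_basis om C -> realizes C F ->
  up_log (decB om).+1 (dec F).+1 <= Icost C.
Proof.
move=> onC realC.
case D: (decB om) => [|D']; first by rewrite /up_log.
apply: up_log_min => //; rewrite -D.
apply: dec_lt_bound => -[|x s] /andP[_ xs]; first by rewrite expn_gt0.
rewrite dC_cons; apply: leq_ltn_trans (circuit_jumps_lt onC xs).
apply: count_steps_sub => a b /andP[_ /hasP[f /realC[i fi] fab]].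
by apply/existsP; exists i; rewrite !fi.
Qed.
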